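(* Let $u(\mathbf{x},\Gamma_{\epsilon\boldsymbol{\omega}})$ be the total field of the impenetrable scattering problem with the randomly perturbed boundary $\Gamma_{\epsilon\boldsymbol{\omega}}=\Gamma+\epsilon\sum_{j=1}^m\omega_j\mathbf{v}_j$, and write $\delta_{\mathbf{v}_i}u$, $\delta_{[\mathbf{v}_i,\mathbf{v}_j]}u$ for its shape derivatives at $\Gamma$ (which coincide with those of the scattered field). Then, for $\mathbf{x}$ in the exterior of the (perturbed) scatterers, as $\epsilon\to0$: (i) $\mathbb{M}_0^1[u](\mathbf{x})=0$; (ii) $\mathbb{M}_0^2[u](\mathbf{x})=\frac{\epsilon^2}{3}\sum_{i=1}^m(\delta_{\mathbf{v}_i}u(\mathbf{x}))^2+\mathcal{O}(\epsilon^4)$; (iii) if $n$ is a positive even integer, $\mathbb{M}_0^n[u](\mathbf{x})=\epsilon^n\,\mathbb{E}\Big[\Big(\sum_{i=1}^m\omega_i\delta_{\mathbf{v}_i}u(\mathbf{x})\Big)^n\Big]+\mathcal{O}(\epsilon^{n+2})$; (iv) if $n$ is a positive odd integer, $$\mathbb{M}_0^n[u](\mathbf{x})=\epsilon^{n+1}\binom n1\mathbb{E}\Big[\Big(\sum_{i=1}^m\omega_i\delta_{\mathbf{v}_i}u(\mathbf{x})\Big)^{n-1}\Big(\frac1{2!}\sum_{i,j=1}^m\omega_i\omega_j\delta_{[\mathbf{v}_i,\mathbf{v}_j]}u(\mathbf{x})-\frac1{3!}\sum_{i=1}^m\delta_{[\mathbf{v}_i,\mathbf{v}_i]}u(\m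athbf{x})\Big)\Big]+\mathcal{O}(\epsilon^{n+3}).$$
   Context: $D\subset\mathbb{R}^2$ is a bounded simply connected open set with smooth boundary $\Gamma$. For a boundary $\Gamma'$, the total field $u_{\rm tot}(\cdot,\Gamma')=\phi+u(\cdot,\Gamma')$ (with $\phi$ a plane wave or point-source incident field independent of the boundary) satisfies $\nabla\cdot\alpha\nabla u_{\rm tot}+k^2u_{\rm tot}=0$ ($\alpha>0$, $k>0$ constants) outside the scatterer bounded by $\Gamma'$, with a sound-soft, sound-hard, or impedance boundary condition on $\Gamma'$, the scattered field satisfying the Sommerfeld radiation condition. The velocity fields $\mathbf{v}_1,\dots,\mathbf{v}_m\in C^\infty(\mathbb{R}^2,\mathbb{R}^2)$ have compact support in a band around $\Gamma$; shape derivatives of order $\ge1$ of the total and scattered fields coincide, and the field is assumed to admit the multivariate shape Taylor expansion $u(\mathbf{x},\Gamma_{\epsilon\boldsymbol\omega})=u(\mathbf{x},\Gamma)+\sum_{q=1}^{N}\frac{\epsilon^q}{q!}\sum_{i_1,\dots,i_q=1}^m\big(\prod_{j=1}^q\omega_{i_j}\big)\delta_{[\mathbf{v}_{i_1},\dots,\mathbf{v}_{i_q}]}u(\mathbf{x})+\mathcal{O}(\epsilon^{N+1})$ uniformly in $\boldsymbol\omega$. The random vector $\boldsymbol\omega=(\omega_1,\dots,\omega_m)$ has independent components uniformly distributed on $[-1,1]$, with density $P$; $\mathbb{E}$ denotes expectation with respect to $P$. Central moments: $\mathbb{M}_0^n[u](\mathbf{x})=\int\big(u(\mathbf{x},\Gamma_{\epsilon\boldsymbol\omega})-\mathbb{E}[u](\mathbf{x})\big)^nP(\boldsymbol\omega)\,d\boldsymbol\omega$,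 where $\mathbb{E}[u](\mathbf{x})=\int u(\mathbf{x},\Gamma_{\epsilon\boldsymbol\omega})P(\boldsymbol\omega)\,d\boldsymbol\omega$. *)

From Stdlib Require Import Reals List Factorial.
From Coquelicot Require Import Coquelicot.
Open Scope R_scope.

Fixpoint csum (m : nat) (h : nat -> C) : C :=
  match m with O => RtoC 0 | S k => Cplus (csum k h) (h k) end.

(** Sum over all multi-indices (i_1,...,i_q) in {0,...,m-1}^q, represented
    as lists of length q:  msum q m g = \sum_{i_1..i_q} g [i_1;...;i_q]. *)
Fixpoint msum (q m : nat) (g : list nat -> C) : C :=
  match q with
  | O => g nil
  | S k => csum m (fun i => msum k m (fun l => g (i :: l)))
  end.

Definition omprod (w : nat -> R) (l : list nat) : R :=
  fold_right (fun i acc => w i * acc) 1 l.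

(** Random vectors omega = (omega_0, ..., omega_{m-1}) are encoded as
    sequences w : nat -> R, only the first m coordinates being relevant. *)
Definition upd (w : nat -> R) (k : nat) (t : R) : nat -> R :=
  fun i => if Nat.eqb i k then t else w i.

(** Expectation w.r.t. the density P of m independent U[-1,1] variables:
    iterated integral  \int_{[-1,1]^m} f(w) 2^{-m} dw  (coordinates < k
    are integrated out; remaining coordinates are set to 0). *)
Fixpoint iterE (k : nat) (f : (nat -> R) -> C) : C :=
  match k with
  | O => f (fun _ => 0)
  | S j => Cmult (RtoC (/ 2))
             (RInt (V := C_R_CompleteNormedModule)
                (fun t => iterE j (fun w => f (upd w j t))) (-1) 1)
  end.

Definition Expect (m : nat) (f : (nat -> R) -> C) : C := iterE m f.

Definition Mcentral (m n : nat) (u : (nat -> R) -> C) : C :=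
  Expect m (fun w => Cpow (Cminus (u w) (Expect m u)) n).

Definition in_box (m : nat) (w : nat -> R) : Prop :=
  forall i, (i < m)%nat -> -1 <= w i <= 1.

Fixpoint taylor_terms (N m : nat) (D : list nat -> C) (eps : R)
    (w : nat -> R) : C :=
  match N with
  | O => RtoC 0
  | S q => Cplus (taylor_terms q m D eps w)
      (Cmult (RtoC (eps ^ S q / INR (fact (S q))))
         (msum (S q) m (fun l => Cmult (RtoC (omprod w l)) (D l))))
  end.

Definition bigO_eps (f g : R -> C) (k : nat) : Prop :=
  exists K e0, 0 < e0 /\
    forall eps, 0 < eps < e0 -> Cmod (Cminus (f eps) (g eps)) <= K * eps ^ k.

From Stdlib Require Import Reals List Factorial Lra Lia FunctionalExtensionality Classical ClassicalEpsilon.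
From Coquelicot Require Import Coquelicot.
Open Scope R_scope.

(* Write z_eps = a + eps b + eps^2 c with a = sum_i w_i D[i] the linear Taylor term, b the
   quadratic Taylor term minus its mean and c the cubic Taylor term (or 0).  The Taylor
   expansion and the oddness of a and c give U_eps - E[U_eps] = eps z_eps + O(eps^(p+1)),
   p = 2 or 3, hence M^n = eps^n E[z_eps^n] + O(eps^(n+p)).  The reflection w |-> -w
   preserves the uniform law, fixes b and negates a and c, so it maps z_eps to -z_(-eps):
   eps |-> E[z_eps^n] is even for even n and odd for odd n.  Symmetrizing the expansion
   z_eps^n = a^n + eps n a^(n-1) b + O(eps^2) therefore leaves E[a^n] + O(eps^2), resp.
   eps n E[a^(n-1) b] + O(eps^3).  Finally E[w_i w_j] = delta_ij / 3.  Expectations are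
   iterated Riemann integrals; they exist and are linear because continuity on the
   compact box is uniform. *)

Lemma RtoC_m1 : RtoC (-1) = Copp (RtoC 1).
Proof. unfold RtoC, Copp; simpl. f_equal; ring. Qed.

Lemma Cmod_minus_triangle a b c : Cmod (Cminus a b) <= Cmod (Cminus a c) + Cmod (Cminus b c).
Proof.
  replace (Cminus a b) with (Cplus (Cminus a c) (Copp (Cminus b c))) by ring.
  eapply Rle_trans; [apply Cmod_triangle|]. rewrite Cmod_opp. lra.
Qed.

Lemma Cmod_plus_le x y X Y : Cmod x <= X -> Cmod y <= Y -> Cmod (Cplus x y) <= X + Y.
Proof. intros. eapply Rle_trans; [apply Cmod_triangle|]. lra. Qed.

Lemma Cmod_mult_le x y X Y : Cmod x <= X -> Cmod y <= Y -> Cmod (Cmult x y) <= X * Y.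
Proof. intros. rewrite Cmod_mult. apply Rmult_le_compat; auto using Cmod_ge_0. Qed.

Lemma Cmod_pow_le x X n : Cmod x <= X -> Cmod (Cpow x n) <= X ^ n.
Proof. intros. rewrite Cmod_pow. apply pow_incr. split; auto using Cmod_ge_0. Qed.

Lemma C_eq_opp_0 (z : C) : z = Copp z -> z = RtoC 0.
Proof.
  intros H. assert (H2 : Cplus z z = RtoC 0) by (rewrite H at 1; ring).
  destruct z as [a b]. unfold Cplus, RtoC in H2; simpl in H2. injection H2; intros.
  unfold RtoC. f_equal; lra.
Qed.

Lemma pow_le_pow_small (e : R) a b : 0 <= e <= 1 -> (b <= a)%nat -> e ^ a <= e ^ b.
Proof.
  intros He Hab. induction Hab as [|a _ IH]; [lra|].
  simpl. assert (0 <= e ^ a) by (apply pow_le; lra). nra.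
Qed.

Lemma is_RInt_Cmult (c : C) (h : R -> C) a b (l : C) :
  is_RInt (V:=C_R_NormedModule) h a b l ->
  is_RInt (V:=C_R_NormedModule) (fun t => Cmult c (h t)) a b (Cmult c l).
Proof.
  intros H.
  assert (Hre := is_RInt_fct_extend_fst (U:=R_NormedModule) (V:=R_NormedModule) h a b l H).
  assert (Him := is_RInt_fct_extend_snd (U:=R_NormedModule) (V:=R_NormedModule) h a b l H).
  destruct c as [cr ci], l as [lr li]; simpl in Hre, Him.
  assert (E1 := is_RInt_minus _ _ _ _ _ _ (is_RInt_scal _ _ _ cr _ Hre) (is_RInt_scal _ _ _ ci _ Him)).
  assert (E2 := is_RInt_plus _ _ _ _ _ _ (is_RInt_scal _ _ _ cr _ Him) (is_RInt_scal _ _ _ ci _ Hre)).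
  apply (is_RInt_fct_extend_pair (U:=R_NormedModule) (V:=R_NormedModule)); simpl.
  - eapply is_RInt_ext; [|exact E1]. intros x _.
    unfold minus, plus, opp, scal; simpl; unfold mult, plus, opp; simpl. destruct (h x); simpl; ring.
  - eapply is_RInt_ext; [|exact E2]. intros x _.
    unfold plus, scal; simpl; unfold mult, plus; simpl. destruct (h x); simpl; ring.
Qed.

Lemma upd_in_box j w t : in_box j w -> -1 <= t <= 1 -> in_box (S j) (upd w j t).
Proof.
  intros Hw Ht i Hi. unfold upd. destruct (Nat.eqb_spec i j); [exact Ht|].
  apply Hw. lia.
Qed.

Lemma Rmin_Rmax_m1_1 t : Rmin (-1) 1 < t < Rmax (-1) 1 -> -1 <= t <= 1.
Proof. rewrite Rmin_left, Rmax_right by lra. lra. Qed.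

Lemma half_scal_2 (c : C) : Cmult (RtoC (/2)) (scal (1 - -1) c) = c.
Proof.
  rewrite scal_R_Cmult, Cmult_assoc, <- RtoC_mult.
  replace (/2 * (1 - -1)) with 1 by field. apply Cmult_1_l.
Qed.

Lemma iterE_ext k : forall f g, (forall w, in_box k w -> f w = g w) -> iterE k f = iterE k g.
Proof.
  induction k as [|j IH]; intros f g H; simpl.
  - apply H. intros i Hi; lia.
  - f_equal. apply RInt_ext. intros t Ht. apply IH. intros w Hw. apply H.
    apply upd_in_box; auto. apply Rmin_Rmax_m1_1; auto.
Qed.

Lemma iterE_const k : forall c, iterE k (fun _ => c) = c.
Proof.
  induction k as [|j IH]; intros c; simpl; auto.
  rewrite (RInt_ext (V:=C_R_CompleteNormedModule) _ (fun _ => c)) by (intros; apply IH).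
  rewrite RInt_const. apply half_scal_2.
Qed.

Fixpoint iter_integrable (k : nat) (f : (nat -> R) -> C) : Prop :=
  match k with
  | O => True
  | S j => (forall t, -1 <= t <= 1 -> iter_integrable j (fun w => f (upd w j t))) /\
           ex_RInt (V:=C_R_NormedModule) (fun t => iterE j (fun w => f (upd w j t))) (-1) 1
  end.

Lemma iter_integrable_ext k : forall f g, (forall w, in_box k w -> f w = g w) ->
  iter_integrable k f -> iter_integrable k g.
Proof.
  induction k as [|j IH]; intros f g H Hf; simpl; auto.
  destruct Hf as [Hsec Hint]. split.
  - intros t Ht. apply (IH (fun w => f (upd w j t))); auto.
    intros w Hw. apply H. apply upd_in_box; auto.
  - eapply ex_RInt_ext; [|exact Hint]. intros t Ht. simpl. apply iterE_ext.
    intros w Hw; apply H. apply upd_in_box; auto. apply Rmin_Rmax_m1_1; auto.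
Qed.

Lemma iterE_plus_integrable k : forall f g, iter_integrable k f -> iter_integrable k g ->
  iter_integrable k (fun w => Cplus (f w) (g w)) /\
  iterE k (fun w => Cplus (f w) (g w)) = Cplus (iterE k f) (iterE k g).
Proof.
  induction k as [|j IH]; intros f g Hf Hg; simpl; auto.
  destruct Hf as [Hf1 Hf2], Hg as [Hg1 Hg2].
  set (hf := fun t => iterE j (fun w => f (upd w j t))) in *.
  set (hg := fun t => iterE j (fun w => g (upd w j t))) in *.
  assert (Hsec : forall t, Rmin (-1) 1 < t < Rmax (-1) 1 ->
     Cplus (hf t) (hg t) = iterE j (fun w => Cplus (f (upd w j t)) (g (upd w j t)))).
  { intros t Ht. apply Rmin_Rmax_m1_1 in Ht. symmetry. apply IH; auto. }
  split; [split|].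
  - intros t Ht. apply IH; auto.
  - eapply ex_RInt_ext; [exact Hsec|]. exact (ex_RInt_plus (V:=C_R_NormedModule) _ _ _ _ Hf2 Hg2).
  - rewrite <- (RInt_ext (V:=C_R_CompleteNormedModule) _ _ _ _ Hsec).
    assert (E : RInt (V:=C_R_CompleteNormedModule) (fun t => Cplus (hf t) (hg t)) (-1) 1
      = Cplus (RInt (V:=C_R_CompleteNormedModule) hf (-1) 1) (RInt (V:=C_R_CompleteNormedModule) hg (-1) 1))
      by exact (RInt_plus (V:=C_R_CompleteNormedModule) _ _ _ _ Hf2 Hg2).
    rewrite E. ring.
Qed.

Lemma iterE_scal_integrable k : forall (c : C) f, iter_integrable k f ->
  iter_integrable k (fun w => Cmult c (f w)) /\
  iterE k (fun w => Cmult c (f w)) = Cmult c (iterE k f).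
Proof.
  induction k as [|j IH]; intros c f Hf; simpl; auto.
  destruct Hf as [Hf1 [l Hl]].
  set (hf := fun t => iterE j (fun w => f (upd w j t))) in *.
  assert (Hsec : forall t, Rmin (-1) 1 < t < Rmax (-1) 1 ->
     Cmult c (hf t) = iterE j (fun w => Cmult c (f (upd w j t)))).
  { intros t Ht. apply Rmin_Rmax_m1_1 in Ht. symmetry. apply IH; auto. }
  assert (Hc := is_RInt_Cmult c _ _ _ _ Hl).
  split; [split|].
  - intros t Ht. apply IH; auto.
  - eexists. eapply is_RInt_ext; [exact Hsec|exact Hc].
  - rewrite <- (RInt_ext (V:=C_R_CompleteNormedModule) _ _ _ _ Hsec).
    rewrite (is_RInt_unique (V:=C_R_CompleteNormedModule) _ _ _ _ Hc).
    rewrite (is_RInt_unique (V:=C_R_CompleteNormedModule) _ _ _ _ Hl). ring.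
Qed.

Lemma iterE_minus_integrable k f g : iter_integrable k f -> iter_integrable k g ->
  iter_integrable k (fun w => Cminus (f w) (g w)) /\
  iterE k (fun w => Cminus (f w) (g w)) = Cminus (iterE k f) (iterE k g).
Proof.
  intros Hf Hg.
  destruct (iterE_scal_integrable k (RtoC (-1)) g Hg) as [Hg' Eg].
  destruct (iterE_plus_integrable k f _ Hf Hg') as [Hfg Efg].
  assert (Heq : forall w, in_box k w -> Cplus (f w) (Cmult (RtoC (-1)) (g w)) = Cminus (f w) (g w)).
  { intros; rewrite RtoC_m1; ring. }
  split.
  - eapply iter_integrable_ext; [exact Heq|exact Hfg].
  - rewrite <- (iterE_ext _ _ _ Heq), Efg, Eg, RtoC_m1. ring.
Qed.

Lemma iterE_norm_le_integrable k : forall f M, iter_integrable k f ->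
  (forall w, in_box k w -> Cmod (f w) <= M) -> Cmod (iterE k f) <= M.
Proof.
  induction k as [|j IH]; intros f M Hf HM; simpl.
  - apply HM. intros i Hi; lia.
  - destruct Hf as [Hf1 Hf2].
    rewrite Cmod_mult, Cmod_R, Rabs_right by lra.
    assert (Hsec : forall t, -1 <= t <= 1 ->
      norm (K:=R_AbsRing) (V:=C_R_NormedModule) (iterE j (fun w => f (upd w j t))) <= M).
    { intros t Ht; rewrite <- Cmod_norm. apply IH; [apply Hf1; auto|].
      intros w Hw; apply HM; apply upd_in_box; auto. }
    assert (Hint := norm_RInt_le_const (V:=C_R_NormedModule) _ (-1) 1 _ M ltac:(lra) Hsec
       (RInt_correct (V:=C_R_CompleteNormedModule) _ _ _ Hf2)).
    rewrite <- Cmod_norm in Hint. lra.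
Qed.

Lemma iterE_flip_signs k : forall (s : nat -> R) f, (forall i, s i = 1 \/ s i = -1) ->
  iter_integrable k f -> iterE k (fun w => f (fun i => s i * w i)) = iterE k f.
Proof.
  induction k as [|j IH]; intros s f Hs Hf; simpl.
  - f_equal. apply functional_extensionality; intros; ring.
  - destruct Hf as [Hf1 [l Hl]]. f_equal.
    set (h := fun t => iterE j (fun w => f (upd w j t))) in *.
    assert (Hst : forall t, -1 <= t <= 1 -> -1 <= s j * t <= 1).
    { intros t Ht; destruct (Hs j) as [E|E]; rewrite E; lra. }
    rewrite (RInt_ext (V:=C_R_CompleteNormedModule) _ (fun t => h (s j * t))).
    2:{ intros t Ht. apply Rmin_Rmax_m1_1 in Ht. unfold h.
        rewrite <- (IH s (fun w => f (upd w j (s j * t)))); auto.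
        f_equal. apply functional_extensionality; intros w. f_equal.
        apply functional_extensionality; intros i. unfold upd.
        destruct (Nat.eqb_spec i j); subst; auto. }
    rewrite (is_RInt_unique (V:=C_R_CompleteNormedModule) _ _ _ _ Hl).
    destruct (Hs j) as [E|E]; rewrite E.
    + apply is_RInt_unique. eapply is_RInt_ext; [|exact Hl]. intros; f_equal; ring.
    + apply is_RInt_unique.
      assert (Hopp : is_RInt (V:=C_R_NormedModule) h (- (1)) (- (-1)) l).
      { replace (- (1)) with (-1) by ring. replace (- (-1)) with 1 by ring. exact Hl. }
      apply is_RInt_comp_opp, is_RInt_swap, is_RInt_opp in Hopp.
      rewrite opp_opp in Hopp. eapply is_RInt_ext; [|exact Hopp].
      intros t _. simpl. rewrite opp_opp. f_equal; ring.
Qed.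

Definition unif_cont_on_box k (f : (nat -> R) -> C) := forall r, 0 < r -> exists d, 0 < d /\
  forall w w', in_box k w -> in_box k w' -> (forall i, (i < k)%nat -> Rabs (w' i - w i) < d) ->
    Cmod (Cminus (f w') (f w)) < r.

Lemma unif_cont_upd j f t : unif_cont_on_box (S j) f -> -1 <= t <= 1 ->
  unif_cont_on_box j (fun w => f (upd w j t)).
Proof.
  intros H Ht r Hr. destruct (H r Hr) as [d [Hd Hu]]. exists d; split; auto.
  intros w w' Hw Hw' Hc. apply Hu; try (apply upd_in_box; auto).
  intros i Hi. unfold upd. destruct (Nat.eqb_spec i j).
  - rewrite Rminus_diag, Rabs_R0; auto.
  - apply Hc. lia.
Qed.

Definition clamp t := Rmax (-1) (Rmin 1 t).

Lemma clamp_in t : -1 <= clamp t <= 1.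
Proof. unfold clamp, Rmax, Rmin. repeat destruct Rle_dec; lra. Qed.

Lemma clamp_id t : -1 <= t <= 1 -> clamp t = t.
Proof. intros. unfold clamp, Rmax, Rmin. repeat destruct Rle_dec; lra. Qed.

Lemma clamp_lipschitz y z : Rabs (clamp y - clamp z) <= Rabs (y - z).
Proof. unfold clamp, Rmax, Rmin. repeat destruct Rle_dec; unfold Rabs; repeat destruct Rcase_abs; lra. Qed.

(* The section integrand t |-> iterE j (f (upd _ j t)) is uniformly continuous on [-1,1]
   by linearity and the norm bound at level j; extending it by [clamp] makes it
   continuous on all of R, as [ex_RInt_continuous] requires. *)
Lemma unif_cont_iter_integrable k : forall f, unif_cont_on_box k f -> iter_integrable k f.
Proof.
  induction k as [|j IH]; intros f Hf; simpl; auto.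
  split; [intros t Ht; apply IH, unif_cont_upd; auto|].
  set (h := fun t => iterE j (fun w => f (upd w j t))).
  apply (ex_RInt_ext (V:=C_R_NormedModule) (fun t => h (clamp t))).
  { intros t Ht. rewrite clamp_id; auto. apply Rmin_Rmax_m1_1; auto. }
  apply (ex_RInt_continuous (V:=C_R_CompleteNormedModule)). intros z _.
  apply filterlim_locally. intros [r Hr]; simpl.
  destruct (Hf (r/2)) as [d [Hd HU]]; [lra|].
  exists (mkposreal d Hd). intros y Hy.
  change (Rabs (y - z) < d) in Hy.
  apply (norm_compat1 (V:=C_R_NormedModule)). rewrite <- Cmod_norm.
  change (minus (h (clamp y)) (h (clamp z))) with (Cminus (h (clamp y)) (h (clamp z))).
  assert (Iy := IH _ (unif_cont_upd j f (clamp y) Hf (clamp_in y))).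
  assert (Iz := IH _ (unif_cont_upd j f (clamp z) Hf (clamp_in z))).
  destruct (iterE_minus_integrable j _ _ Iy Iz) as [Iyz E]. unfold h. rewrite <- E.
  apply Rle_lt_trans with (r/2); [|lra].
  apply iterE_norm_le_integrable; auto.
  intros w Hw. left. apply HU; try (apply upd_in_box; auto; apply clamp_in).
  intros i Hi. unfold upd. destruct (Nat.eqb_spec i j).
  - eapply Rle_lt_trans; [apply clamp_lipschitz|exact Hy].
  - rewrite Rminus_diag, Rabs_R0; auto.
Qed.

Fixpoint tuple_to_seq (n : nat) : Compactness.Tn n R -> nat -> R :=
  match n return Compactness.Tn n R -> nat -> R with
  | O => fun _ _ => 0
  | S n' => fun x i => match i with O => fst x | S i' => tuple_to_seq n' (snd x) i' end
  end.

Fixpoint seq_to_tuple (n : nat) (w : nat -> R) : Compactness.Tn n R :=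
  match n return Compactness.Tn n R with
  | O => tt
  | S n' => (w O, seq_to_tuple n' (fun i => w (S i)))
  end.

Lemma tuple_to_seqK n : forall w i, (i < n)%nat -> tuple_to_seq n (seq_to_tuple n w) i = w i.
Proof.
  induction n as [|n IH]; intros w i Hi; [lia|].
  destruct i; simpl; auto. rewrite IH; auto. lia.
Qed.

Lemma seq_to_tuple_bounded n : forall w, in_box n w ->
  bounded_n n (seq_to_tuple n (fun _ => -1)) (seq_to_tuple n (fun _ => 1)) (seq_to_tuple n w).
Proof.
  induction n as [|n IH]; intros w Hw; simpl; auto.
  split; [apply (Hw 0%nat); lia|].
  apply IH. intros i Hi. apply Hw. lia.
Qed.

Lemma tuple_to_seq_in_box n : forall t,
  bounded_n n (seq_to_tuple n (fun _ => -1)) (seq_to_tuple n (fun _ => 1)) t ->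
  in_box n (tuple_to_seq n t).
Proof.
  induction n as [|n IH]; intros t Ht i Hi; [lia|].
  destruct t as [t1 t2], Ht as [Ht1 Ht2].
  destruct i; simpl; auto. apply IH; auto. lia.
Qed.

Lemma close_n_tuple_to_seq n : forall e x t, close_n n e x t ->
  forall i, (i < n)%nat -> Rabs (tuple_to_seq n x i - tuple_to_seq n t i) < e.
Proof.
  induction n as [|n IH]; intros e x t H i Hi; [lia|].
  destruct x as [x1 x2], t as [t1 t2], H as [H1 H2].
  destruct i; simpl; auto. apply IH; auto. lia.
Qed.

Definition cont_on_box k (f : (nat -> R) -> C) := forall w, in_box k w ->
  forall r, 0 < r -> exists d, 0 < d /\
    forall w', in_box k w' -> (forall i, (i < k)%nat -> Rabs (w' i - w i) < d) ->
      Cmod (Cminus (f w') (f w)) < r.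

(* Heine-Cantor: the box, encoded as a product of [k] intervals, is covered using
   Coquelicot's Lebesgue-number lemma [compactness_value]. *)
Lemma cont_on_box_unif_cont k f : cont_on_box k f -> unif_cont_on_box k f.
Proof.
  intros Hc r Hr.
  assert (Hex : forall t : Compactness.Tn k R, exists d, 0 < d /\
    (in_box k (tuple_to_seq k t) -> forall w', in_box k w' ->
       (forall i, (i < k)%nat -> Rabs (w' i - tuple_to_seq k t i) < d) ->
       Cmod (Cminus (f w') (f (tuple_to_seq k t))) < r/2)).
  { intros t. destruct (classic (in_box k (tuple_to_seq k t))) as [Hb|Hb].
    - destruct (Hc _ Hb (r/2)) as [d [Hd H]]; [lra|]. exists d; split; auto.
    - exists 1; split; [lra|]. intros; contradiction. }
  destruct (choice _ Hex) as [dd Hdd].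
  pose (delta := fun t => mkposreal (dd t / 2) ltac:(destruct (Hdd t); lra)).
  destruct (compactness_value k (seq_to_tuple k (fun _ => -1)) (seq_to_tuple k (fun _ => 1)) delta)
    as [d0 Hd0].
  exists d0. split; [apply cond_pos|].
  intros w w' Hw Hw' Hcl.
  apply NNPP. intros Hn.
  apply (Hd0 (seq_to_tuple k w) (seq_to_tuple_bounded k w Hw)). intros [t [Hbt [Hct Hle]]].
  apply Hn. simpl in Hle.
  destruct (Hdd t) as [Hpos Ht].
  assert (Htb := tuple_to_seq_in_box k t Hbt).
  assert (Hclose : forall i, (i < k)%nat -> Rabs (w i - tuple_to_seq k t i) < dd t / 2).
  { intros i Hi. rewrite <- (tuple_to_seqK k w i Hi). apply close_n_tuple_to_seq; auto. }
  assert (Hw_t : Cmod (Cminus (f w) (f (tuple_to_seq k t))) < r/2).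
  { apply Ht; auto. intros i Hi. specialize (Hclose i Hi). lra. }
  assert (Hw'_t : Cmod (Cminus (f w') (f (tuple_to_seq k t))) < r/2).
  { apply Ht; auto. intros i Hi. specialize (Hclose i Hi). specialize (Hcl i Hi).
    replace (w' i - tuple_to_seq k t i) with ((w' i - w i) + (w i - tuple_to_seq k t i)) by ring.
    eapply Rle_lt_trans; [apply Rabs_triang|]. lra. }
  eapply Rle_lt_trans; [apply (Cmod_minus_triangle _ _ (f (tuple_to_seq k t)))|]. lra.
Qed.

Definition bounded_on_box k (f : (nat -> R) -> C) :=
  exists M, forall w, in_box k w -> Cmod (f w) <= M.

Definition regular k f := unif_cont_on_box k f /\ bounded_on_box k f.

Lemma regular_bound k f : regular k f ->
  exists M, 0 < M /\ forall w, in_box k w -> Cmod (f w) <= M.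
Proof.
  intros [_ [M HM]]. exists (Rabs M + 1). split; [pose proof (Rabs_pos M); lra|].
  intros w Hw. specialize (HM w Hw). pose proof (Rle_abs M). lra.
Qed.

Lemma regular_ext k f g : (forall w, in_box k w -> f w = g w) -> regular k f -> regular k g.
Proof.
  intros H [Hu [M HM]]. split.
  - intros r Hr. destruct (Hu r Hr) as [d [Hd Hd']]. exists d; split; auto.
    intros w w' Hw Hw' Hc. rewrite <- !H by auto. auto.
  - exists M. intros w Hw. rewrite <- H; auto.
Qed.

Lemma regular_const k c : regular k (fun _ => c).
Proof.
  split.
  - intros r Hr. exists 1; split; [lra|]. intros. unfold Cminus. rewrite Cplus_opp_r, Cmod_0; auto.
  - exists (Cmod c). intros; lra.
Qed.

Lemma regular_coord k i : (i < k)%nat -> regular k (fun w => RtoC (w i)).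
Proof.
  intros Hi. split; red.
  - intros r Hr. exists r; split; auto. intros w w' Hw Hw' Hc.
    unfold Cminus. rewrite <- RtoC_opp, <- RtoC_plus, Cmod_R. apply Hc; auto.
  - exists 1. intros w Hw. rewrite Cmod_R. apply Rabs_le. specialize (Hw i Hi). lra.
Qed.

Lemma regular_plus k f g : regular k f -> regular k g -> regular k (fun w => Cplus (f w) (g w)).
Proof.
  intros [Hf [Mf HMf]] [Hg [Mg HMg]]. split.
  - intros r Hr. destruct (Hf (r/2)) as [d1 [Hd1 H1]]; [lra|].
    destruct (Hg (r/2)) as [d2 [Hd2 H2]]; [lra|].
    exists (Rmin d1 d2). split; [apply Rmin_pos; auto|].
    intros w w' Hw Hw' Hc.
    replace (Cminus (Cplus (f w') (g w')) (Cplus (f w) (g w))) with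
      (Cplus (Cminus (f w') (f w)) (Cminus (g w') (g w))) by ring.
    assert (Cmod (Cminus (f w') (f w)) < r/2).
    { apply H1; auto. intros i Hi. eapply Rlt_le_trans; [apply Hc; auto|apply Rmin_l]. }
    assert (Cmod (Cminus (g w') (g w)) < r/2).
    { apply H2; auto. intros i Hi. eapply Rlt_le_trans; [apply Hc; auto|apply Rmin_r]. }
    eapply Rle_lt_trans; [apply Cmod_triangle|]. lra.
  - exists (Mf + Mg). intros w Hw. apply Cmod_plus_le; auto.
Qed.

Lemma regular_mult k f g : regular k f -> regular k g -> regular k (fun w => Cmult (f w) (g w)).
Proof.
  intros Hf Hg.
  destruct (regular_bound k f Hf) as [A [HA HAf]], (regular_bound k g Hg) as [B [HB HBg]].
  split; [|exists (A * B); intros w Hw; apply Cmod_mult_le; auto].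
  intros r Hr.
  destruct (proj1 Hf (r/(2*B))) as [d1 [Hd1 H1]]; [apply Rdiv_lt_0_compat; lra|].
  destruct (proj1 Hg (r/(2*A))) as [d2 [Hd2 H2]]; [apply Rdiv_lt_0_compat; lra|].
  exists (Rmin d1 d2). split; [apply Rmin_pos; auto|].
  intros w w' Hw Hw' Hc.
  replace (Cminus (Cmult (f w') (g w')) (Cmult (f w) (g w))) with
    (Cplus (Cmult (f w') (Cminus (g w') (g w))) (Cmult (g w) (Cminus (f w') (f w)))) by ring.
  assert (Ef : Cmod (Cminus (f w') (f w)) <= r/(2*B)).
  { left. apply H1; auto. intros i Hi. eapply Rlt_le_trans; [apply Hc; auto|apply Rmin_l]. }
  assert (Eg : Cmod (Cminus (g w') (g w)) < r/(2*A)).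
  { apply H2; auto. intros i Hi. eapply Rlt_le_trans; [apply Hc; auto|apply Rmin_r]. }
  eapply Rle_lt_trans.
  { apply Cmod_plus_le; apply Cmod_mult_le; [apply HAf; auto|apply Rle_refl|apply HBg; auto|exact Ef]. }
  assert (A * Cmod (Cminus (g w') (g w)) < r/2).
  { replace (r/2) with (A * (r/(2*A))) by (field; lra). apply Rmult_lt_compat_l; auto. }
  assert (B * (r/(2*B)) = r/2) by (field; lra).
  lra.
Qed.

Lemma regular_scal k c f : regular k f -> regular k (fun w => Cmult c (f w)).
Proof. intros H. apply (regular_mult k (fun _ => c) f); auto. apply regular_const. Qed.

Lemma regular_minus k f g : regular k f -> regular k g -> regular k (fun w => Cminus (f w) (g w)).
Proof.
  intros Hf Hg.
  apply (regular_ext k (fun w => Cplus (f w) (Cmult (RtoC (-1)) (g w)))).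
  - intros; rewrite RtoC_m1; ring.
  - apply regular_plus, regular_scal; auto.
Qed.

Lemma regular_pow k f n : regular k f -> regular k (fun w => Cpow (f w) n).
Proof.
  intros Hf. induction n as [|n IH]; simpl.
  - apply regular_const.
  - apply (regular_mult k f (fun w => Cpow (f w) n)); auto.
Qed.

Lemma regular_csum k n : forall (F : (nat -> R) -> nat -> C),
  (forall i, (i < n)%nat -> regular k (fun w => F w i)) -> regular k (fun w => csum n (F w)).
Proof.
  induction n as [|n IH]; intros F HF; simpl.
  - apply regular_const.
  - apply (regular_plus k (fun w => csum n (F w)) (fun w => F w n)); auto.
Qed.

Lemma regular_msum k m q : forall (G : (nat -> R) -> list nat -> C),
  (forall l, List.Forall (fun i => (i < m)%nat) l -> regular k (fun w => G w l)) ->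
  regular k (fun w => msum q m (G w)).
Proof.
  induction q as [|q IH]; intros G HG; simpl.
  - apply HG. constructor.
  - apply (regular_csum k m (fun w i => msum q m (fun l => G w (i :: l)))).
    intros i Hi. apply (IH (fun w l => G w (i :: l))). intros l Hl. apply HG. constructor; auto.
Qed.

Lemma regular_omprod k l : List.Forall (fun i => (i < k)%nat) l -> regular k (fun w => RtoC (omprod w l)).
Proof.
  induction l as [|i l IH]; intros Hl; simpl.
  - apply regular_const.
  - inversion Hl; subst.
    apply (regular_ext k (fun w => Cmult (RtoC (w i)) (RtoC (omprod w l)))).
    + intros; rewrite RtoC_mult; auto.
    + apply regular_mult; auto. apply regular_coord; auto.
Qed.

Lemma regular_iter_integrable k f : regular k f -> iter_integrable k f.
Proof. intros [H _]. apply unif_cont_iter_integrable; auto. Qed.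

Lemma iterE_plus k f g : regular k f -> regular k g ->
  iterE k (fun w => Cplus (f w) (g w)) = Cplus (iterE k f) (iterE k g).
Proof. intros; apply iterE_plus_integrable; apply regular_iter_integrable; auto. Qed.

Lemma iterE_minus k f g : regular k f -> regular k g ->
  iterE k (fun w => Cminus (f w) (g w)) = Cminus (iterE k f) (iterE k g).
Proof. intros; apply iterE_minus_integrable; apply regular_iter_integrable; auto. Qed.

Lemma iterE_scal k c f : regular k f -> iterE k (fun w => Cmult c (f w)) = Cmult c (iterE k f).
Proof. intros; apply iterE_scal_integrable; apply regular_iter_integrable; auto. Qed.

Lemma iterE_norm_le k f M : regular k f -> (forall w, in_box k w -> Cmod (f w) <= M) ->
  Cmod (iterE k f) <= M.
Proof. intros; apply iterE_norm_le_integrable; auto; apply regular_iter_integrable; auto. Qed.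

Lemma iterE_csum k n : forall (F : (nat -> R) -> nat -> C),
  (forall i, (i < n)%nat -> regular k (fun w => F w i)) ->
  iterE k (fun w => csum n (F w)) = csum n (fun i => iterE k (fun w => F w i)).
Proof.
  induction n as [|n IH]; intros F HF; simpl.
  - apply iterE_const.
  - rewrite (iterE_plus k (fun w => csum n (F w)) (fun w => F w n)); auto.
    + rewrite IH; auto.
    + apply regular_csum; auto.
Qed.

Lemma iterE_odd_eq0 k s f : (forall i, s i = 1 \/ s i = -1) -> regular k f ->
  (forall w, in_box k w -> f (fun i => s i * w i) = Copp (f w)) -> iterE k f = RtoC 0.
Proof.
  intros Hs Hf Hodd. apply C_eq_opp_0.
  rewrite <- (iterE_flip_signs k s f Hs (regular_iter_integrable k f Hf)) at 1.
  rewrite (iterE_ext k _ (fun w => Cmult (RtoC (-1)) (f w))).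
  - rewrite iterE_scal, RtoC_m1 by auto. ring.
  - intros w Hw. rewrite Hodd, RtoC_m1 by auto. ring.
Qed.

Lemma iterE_coord_fun k : forall i (g : R -> C), (i < k)%nat ->
  iterE k (fun w => g (w i)) = Cmult (RtoC (/2)) (RInt (V:=C_R_CompleteNormedModule) g (-1) 1).
Proof.
  induction k as [|j IH]; intros i g Hi; [lia|]. simpl.
  destruct (Nat.eq_dec i j) as [->|Hij].
  - f_equal. apply RInt_ext. intros t _.
    rewrite (iterE_ext j _ (fun _ => g t)); [apply iterE_const|].
    intros w _. unfold upd. rewrite Nat.eqb_refl. auto.
  - rewrite (RInt_ext (V:=C_R_CompleteNormedModule) _ (fun _ => iterE j (fun w => g (w i)))).
    + rewrite RInt_const, half_scal_2. apply IH. lia.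
    + intros t _. apply iterE_ext. intros w _. unfold upd.
      destruct (Nat.eqb_spec i j); [lia|auto].
Qed.

Lemma RInt_square_m1_1 : RInt (V:=C_R_CompleteNormedModule) (fun t => RtoC (t * t)) (-1) 1 = RtoC (2/3).
Proof.
  apply (is_RInt_unique (V:=C_R_CompleteNormedModule)).
  apply (is_RInt_fct_extend_pair (U:=R_NormedModule) (V:=R_NormedModule)); simpl.
  - replace (2/3) with (minus ((fun t => t*t*t/3) 1) ((fun t => t*t*t/3) (-1))).
    2:{ unfold minus, plus, opp; simpl. field. }
    apply (is_RInt_derive (V:=R_CompleteNormedModule) (fun t => t*t*t/3) (fun t => t*t)).
    + intros x _. auto_derive; auto. field.
    + intros x _. apply (ex_derive_continuous (V:=R_NormedModule)). auto_derive; auto.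
  - assert (H := is_RInt_const (V:=R_NormedModule) (-1) 1 0).
    replace (scal (1 - -1) (0 : R_NormedModule)) with 0 in H; [exact H|].
    unfold scal; simpl; unfold mult; simpl. ring.
Qed.

Lemma regular_coord_mul k i j : (i < k)%nat -> (j < k)%nat ->
  regular k (fun w => RtoC (w i * w j)).
Proof.
  intros Hi Hj. apply (regular_ext k (fun w => Cmult (RtoC (w i)) (RtoC (w j)))).
  - intros; rewrite RtoC_mult; auto.
  - apply regular_mult; apply regular_coord; auto.
Qed.

Lemma iterE_coord_mul k i j : (i < k)%nat -> (j < k)%nat ->
  iterE k (fun w => RtoC (w i * w j)) = if Nat.eqb i j then RtoC (/3) else RtoC 0.
Proof.
  intros Hi Hj. destruct (Nat.eqb_spec i j) as [<-|Hij].
  - rewrite (iterE_coord_fun k i (fun t => RtoC (t * t))), RInt_square_m1_1, <- RtoC_mult by auto.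
    f_equal. field.
  - apply (iterE_odd_eq0 k (fun l => if Nat.eqb l i then -1 else 1)).
    + intros l. destruct (Nat.eqb l i); auto.
    + apply regular_coord_mul; auto.
    + intros w _. rewrite Nat.eqb_refl. destruct (Nat.eqb_spec j i); [lia|].
      rewrite <- RtoC_opp. f_equal. ring.
Qed.

Lemma csum_ext n f g : (forall i, (i < n)%nat -> f i = g i) -> csum n f = csum n g.
Proof.
  induction n as [|n IH]; intros H; simpl; auto.
  rewrite IH by (intros; apply H; lia). rewrite H by lia. auto.
Qed.

Lemma csum_scal n c f : csum n (fun i => Cmult c (f i)) = Cmult c (csum n f).
Proof. induction n as [|n IH]; simpl; [|rewrite IH]; ring. Qed.

Lemma csum_scal_r n f c : csum n (fun i => Cmult (f i) c) = Cmult (csum n f) c.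
Proof. induction n as [|n IH]; simpl; [|rewrite IH]; ring. Qed.

Lemma csum_mult n f g :
  Cmult (csum n f) (csum n g) = csum n (fun i => csum n (fun j => Cmult (f i) (g j))).
Proof.
  rewrite <- csum_scal_r. apply csum_ext. intros i _. rewrite <- csum_scal. auto.
Qed.

Lemma csum_zero n f : (forall i, (i < n)%nat -> f i = RtoC 0) -> csum n f = RtoC 0.
Proof.
  induction n as [|n IH]; intros H; simpl; auto.
  rewrite IH by (intros; apply H; lia). rewrite H by lia. ring.
Qed.

Lemma csum_delta n i (x : nat -> C) : (i < n)%nat ->
  csum n (fun j => if Nat.eqb i j then x j else RtoC 0) = x i.
Proof.
  induction n as [|n IH]; intros Hi; [lia|]. simpl.
  destruct (Nat.eqb_spec i n) as [->|Hne].
  - rewrite csum_zero; [destruct (Nat.eqb_spec n n); [ring|lia]|].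
    intros j Hj. destruct (Nat.eqb_spec n j); [lia|auto].
  - rewrite IH by lia. ring.
Qed.

Lemma iterE_quadratic_form m (Q : nat -> nat -> C) :
  iterE m (fun w => csum m (fun i => csum m (fun j => Cmult (RtoC (w i * w j)) (Q i j))))
  = Cmult (RtoC (/3)) (csum m (fun i => Q i i)).
Proof.
  assert (Hreg : forall i j, (i < m)%nat -> (j < m)%nat ->
    regular m (fun w => Cmult (RtoC (w i * w j)) (Q i j))).
  { intros i j Hi Hj. apply (regular_mult m (fun w => RtoC (w i * w j)) (fun _ => Q i j));
      [|apply regular_const].
    apply regular_coord_mul; auto. }
  rewrite (iterE_csum m m (fun w i => csum m (fun j => Cmult (RtoC (w i * w j)) (Q i j)))).
  2:{ intros i Hi. apply regular_csum. intros; apply Hreg; auto. }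
  rewrite <- csum_scal. apply csum_ext. intros i Hi.
  rewrite (iterE_csum m m (fun w j => Cmult (RtoC (w i * w j)) (Q i j))) by (intros; apply Hreg; auto).
  rewrite <- (csum_delta m i (fun j => Cmult (RtoC (/3)) (Q i j))) by auto.
  apply csum_ext. intros j Hj.
  rewrite (iterE_ext m _ (fun w => Cmult (Q i j) (RtoC (w i * w j)))) by (intros; ring).
  rewrite iterE_scal, iterE_coord_mul; auto.
  - destruct (Nat.eqb_spec i j); subst; ring.
  - apply regular_coord_mul; auto.
Qed.

Lemma Cpow_S_sub_le n : forall x y : C,
  Cmod (Cminus (Cpow (Cplus x y) (S n)) (Cpow x (S n))) <= INR (S n) * (Cmod x + Cmod y) ^ n * Cmod y.
Proof.
  induction n as [|n IH]; intros x y.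
  - simpl. replace (Cminus (Cmult (Cplus x y) (RtoC 1)) (Cmult x (RtoC 1))) with y by ring. lra.
  - replace (Cminus (Cpow (Cplus x y) (S (S n))) (Cpow x (S (S n)))) with
      (Cplus (Cmult (Cplus x y) (Cminus (Cpow (Cplus x y) (S n)) (Cpow x (S n))))
             (Cmult y (Cpow x (S n)))) by (simpl; ring).
    set (S_xy := Cmod x + Cmod y).
    pose proof (Cmod_ge_0 x). pose proof (Cmod_ge_0 y).
    assert (Hx : Cmod x <= S_xy) by (unfold S_xy; lra).
    eapply Rle_trans.
    { apply Cmod_plus_le; apply Cmod_mult_le.
      - apply Cmod_triangle.
      - apply IH.
      - apply Rle_refl.
      - apply Cmod_pow_le, Hx. }
    fold S_xy. rewrite (S_INR (S n)). simpl.
    assert (0 <= S_xy ^ n) by (apply pow_le; unfold S_xy; lra).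
    assert (0 <= INR (S n)) by apply pos_INR.
    assert (S_xy ^ n * Cmod x <= S_xy ^ n * S_xy) by (apply Rmult_le_compat_l; auto).
    nra.
Qed.

Lemma Cpow_sub_le_of_close n x v e X Y Z : 0 <= e ->
  Cmod x <= e * X -> Cmod (Cminus v x) <= e * Y -> Cmod (Cminus v x) <= Z ->
  Cmod (Cminus (Cpow v n) (Cpow x n)) <= INR n * (e * (X + Y)) ^ (n - 1) * Z.
Proof.
  intros He Hx Hy HZ. destruct n as [|n].
  - simpl. unfold Cminus. rewrite Cplus_opp_r, Cmod_0. lra.
  - replace v with (Cplus x (Cminus v x)) at 1 by ring.
    eapply Rle_trans; [apply Cpow_S_sub_le|].
    replace (S n - 1)%nat with n by lia.
    pose proof (Cmod_ge_0 x). pose proof (Cmod_ge_0 (Cminus v x)). pose proof (pos_INR (S n)).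
    apply Rmult_le_compat; try lra.
    + apply Rmult_le_pos; [lra|apply pow_le; lra].
    + apply Rmult_le_compat_l; [lra|]. apply pow_incr. lra.
Qed.

Lemma Cpow_opp_even n x : Nat.Even n -> Cpow (Copp x) n = Cpow x n.
Proof.
  intros [k ->]. induction k as [|k IH]; [reflexivity|].
  replace (2 * S k)%nat with (S (S (2 * k))) by lia. rewrite !Cpow_S, IH. ring.
Qed.

Lemma Cpow_opp_odd n x : Nat.Odd n -> Cpow (Copp x) n = Copp (Cpow x n).
Proof.
  intros [k ->]. replace (2 * k + 1)%nat with (S (2 * k)) by lia.
  rewrite !Cpow_S, Cpow_opp_even by (exists k; reflexivity). ring.
Qed.

Definition perturb (a b c : C) (e : R) :=
  Cplus (Cplus a (Cmult (RtoC e) b)) (Cmult (Cmult (RtoC e) (RtoC e)) c).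

Lemma perturb_norm_le a b c e M : Cmod a <= M -> Cmod b <= M -> Cmod c <= M -> Rabs e <= 1 ->
  Cmod (perturb a b c e) <= 3 * M.
Proof.
  intros Ha Hb Hc He. pose proof (Rabs_pos e).
  assert (Hee : Cmod (Cmult (RtoC e) (RtoC e)) <= 1) by (rewrite Cmod_mult, Cmod_R; nra).
  unfold perturb. eapply Rle_trans.
  { apply Cmod_plus_le; [apply Cmod_plus_le|]; [exact Ha| |];
      apply Cmod_mult_le; eauto; rewrite Cmod_R; exact He. }
  lra.
Qed.

(* [coef2 n a b c] is the coefficient of e^2 in [perturb a b c e ^ n]; the
   coefficients of e^0 and e^1 are a^n and n a^(n-1) b. *)
Fixpoint coef2 (n : nat) (a b c : C) : C :=
  match n with
  | O => RtoC 0
  | S n' => Cplus (Cplus (Cmult a (coef2 n' a b c))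
                         (Cmult (Cmult (Cmult (RtoC (INR n')) (Cpow a (n' - 1))) b) b))
                  (Cmult c (Cpow a n'))
  end.

Definition rem2 (n : nat) a b c (e : R) :=
  Cminus (Cpow (perturb a b c e) n)
    (Cplus (Cplus (Cpow a n) (Cmult (Cmult (Cmult (RtoC e) (RtoC (INR n))) (Cpow a (n - 1))) b))
       (Cmult (Cmult (RtoC e) (RtoC e)) (coef2 n a b c))).

Lemma rem2_S n a b c e :
  rem2 (S n) a b c e = Cplus (Cplus (Cmult (perturb a b c e) (rem2 n a b c e))
     (Cmult (Cmult (Cmult (RtoC e) (RtoC e)) (RtoC e))
        (Cplus (Cmult b (coef2 n a b c)) (Cmult (Cmult (Cmult (RtoC (INR n)) (Cpow a (n - 1))) b) c))))
     (Cmult (Cmult (Cmult (Cmult (RtoC e) (RtoC e)) (RtoC e)) (RtoC e)) (Cmult c (coef2 n a b c))).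
Proof.
  unfold rem2. simpl coef2. destruct n as [|n].
  - simpl. unfold perturb. ring.
  - replace (S (S n) - 1)%nat with (S n) by lia. replace (S n - 1)%nat with n by lia.
    rewrite !S_INR, !RtoC_plus, !Cpow_S. unfold perturb. ring.
Qed.

Lemma coef2_bound n M : 0 <= M -> exists K, 0 <= K /\ forall a b c,
  Cmod a <= M -> Cmod b <= M -> Cmod c <= M -> Cmod (coef2 n a b c) <= K.
Proof.
  intros HM. induction n as [|n [K [HK IH]]].
  - exists 0. split; [lra|]. intros. simpl. rewrite Cmod_0. lra.
  - pose proof (pos_INR n). pose proof (pow_le M (n - 1) HM). pose proof (pow_le M n HM).
    exists (M * K + INR n * M ^ (n - 1) * M * M + M * M ^ n).
    split; [repeat apply Rplus_le_le_0_compat; repeat apply Rmult_le_pos; auto|].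
    intros a b c Ha Hb Hc. simpl coef2.
    repeat apply Cmod_plus_le; repeat apply Cmod_mult_le; auto using Cmod_pow_le.
    rewrite Cmod_R, Rabs_right; lra.
Qed.

Lemma rem2_bound n M : 0 <= M -> exists K, 0 <= K /\ forall a b c e,
  Cmod a <= M -> Cmod b <= M -> Cmod c <= M -> Rabs e <= 1 ->
  Cmod (rem2 n a b c e) <= K * Rabs e ^ 3.
Proof.
  intros HM. induction n as [|n [K [HK IH]]].
  - exists 0. split; [lra|]. intros a b c e _ _ _ _.
    unfold rem2. simpl.
    replace (Cminus (RtoC 1) _) with (RtoC 0) by ring. rewrite Cmod_0. lra.
  - destruct (coef2_bound n M HM) as [KQ [HKQ HQ]].
    pose proof (pos_INR n). pose proof (pow_le M (n - 1) HM).
    set (L := M * KQ + INR n * M ^ (n - 1) * M * M).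
    assert (HL : 0 <= L) by (unfold L; apply Rplus_le_le_0_compat; repeat apply Rmult_le_pos; auto).
    exists (3 * M * K + L + M * KQ). split; [nra|].
    intros a b c e Ha Hb Hc He. pose proof (Rabs_pos e).
    assert (He3 : Cmod (Cmult (Cmult (RtoC e) (RtoC e)) (RtoC e)) = Rabs e ^ 3).
    { rewrite !Cmod_mult, !Cmod_R. ring. }
    assert (He4 : Cmod (Cmult (Cmult (Cmult (RtoC e) (RtoC e)) (RtoC e)) (RtoC e)) <= Rabs e ^ 3).
    { rewrite Cmod_mult, He3, Cmod_R. rewrite <- (Rmult_1_r (Rabs e ^ 3)) at 2.
      apply Rmult_le_compat_l; auto. apply pow_le; auto. }
    assert (Hlin : Cmod (Cplus (Cmult b (coef2 n a b c))
        (Cmult (Cmult (Cmult (RtoC (INR n)) (Cpow a (n - 1))) b) c)) <= L).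
    { apply Cmod_plus_le; repeat apply Cmod_mult_le; auto using Cmod_pow_le.
      rewrite Cmod_R, Rabs_right; lra. }
    rewrite rem2_S. eapply Rle_trans.
    { apply Cmod_plus_le; [apply Cmod_plus_le|]; apply Cmod_mult_le.
      - apply (perturb_norm_le a b c e M); auto.
      - apply IH; auto.
      - rewrite He3. apply Rle_refl.
      - exact Hlin.
      - exact He4.
      - apply Cmod_mult_le; [exact Hc|apply HQ; auto]. }
    apply Req_le. ring.
Qed.

Lemma perturb_pow_odd_part n M : 0 <= M -> exists K, 0 <= K /\ forall a b c e,
  Cmod a <= M -> Cmod b <= M -> Cmod c <= M -> Rabs e <= 1 ->
  Cmod (Cminus (Cminus (Cpow (perturb a b c e) n) (Cpow (perturb a b c (- e)) n))
     (Cmult (Cmult (Cmult (Cmult (RtoC 2) (RtoC e)) (RtoC (INR n))) (Cpow a (n - 1))) b))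
  <= K * Rabs e ^ 3.
Proof.
  intros HM. destruct (rem2_bound n M HM) as [K [HK H]]. exists (2 * K). split; [lra|].
  intros a b c e Ha Hb Hc He.
  assert (Hp := H a b c e Ha Hb Hc He).
  assert (Hm := H a b c (- e) Ha Hb Hc ltac:(rewrite Rabs_Ropp; auto)).
  rewrite Rabs_Ropp in Hm.
  replace (Cminus (Cminus _ _) _) with (Cminus (rem2 n a b c e) (rem2 n a b c (- e)))
    by (unfold rem2; rewrite RtoC_opp; ring).
  unfold Cminus. eapply Rle_trans; [apply Cmod_triangle|]. rewrite Cmod_opp. lra.
Qed.

Lemma perturb_pow_even_part n M : 0 <= M -> exists K, 0 <= K /\ forall a b c e,
  Cmod a <= M -> Cmod b <= M -> Cmod c <= M -> Rabs e <= 1 ->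
  Cmod (Cminus (Cplus (Cpow (perturb a b c e) n) (Cpow (perturb a b c (- e)) n))
     (Cmult (RtoC 2) (Cpow a n))) <= K * Rabs e ^ 2.
Proof.
  intros HM. destruct (rem2_bound n M HM) as [K [HK H]].
  destruct (coef2_bound n M HM) as [KQ [HKQ HQ]].
  exists (2 * K + 2 * KQ). split; [lra|].
  intros a b c e Ha Hb Hc He. pose proof (Rabs_pos e).
  assert (Hp := H a b c e Ha Hb Hc He).
  assert (Hm := H a b c (- e) Ha Hb Hc ltac:(rewrite Rabs_Ropp; auto)).
  rewrite Rabs_Ropp in Hm.
  replace (Cminus (Cplus _ _) _) with
    (Cplus (Cplus (rem2 n a b c e) (rem2 n a b c (- e)))
       (Cmult (Cmult (RtoC 2) (Cmult (RtoC e) (RtoC e))) (coef2 n a b c)))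
    by (unfold rem2; rewrite RtoC_opp; ring).
  assert (E2 : Cmod (Cmult (RtoC 2) (Cmult (RtoC e) (RtoC e))) = 2 * Rabs e ^ 2).
  { rewrite !Cmod_mult, !Cmod_R, Rabs_right by lra. ring. }
  assert (E3 : Rabs e ^ 3 <= Rabs e ^ 2) by (apply pow_le_pow_small; lia || lra).
  eapply Rle_trans.
  { apply Cmod_plus_le; [apply Cmod_plus_le; [exact Hp|exact Hm]|].
    apply Cmod_mult_le; [rewrite E2; apply Rle_refl|apply HQ; auto]. }
  assert (K * Rabs e ^ 3 <= K * Rabs e ^ 2) by (apply Rmult_le_compat_l; auto).
  nra.
Qed.

Definition negw (w : nat -> R) := fun i => -1 * w i.

Definition pert_moment k A B Cc n e :=
  iterE k (fun w => Cpow (perturb (A w) (B w) (Cc w) e) n).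

Lemma regular_perturb k A B Cc e : regular k A -> regular k B -> regular k Cc ->
  regular k (fun w => perturb (A w) (B w) (Cc w) e).
Proof.
  intros HA HB HC. unfold perturb.
  apply (regular_plus k (fun w => Cplus (A w) (Cmult (RtoC e) (B w)))), regular_scal; auto.
  apply regular_plus, regular_scal; auto.
Qed.

Section Symmetric_perturbation.

Variable k : nat.
Variables A B Cc : (nat -> R) -> C.
Hypothesis regA : regular k A.
Hypothesis regB : regular k B.
Hypothesis regC : regular k Cc.
Hypothesis A_odd : forall w, in_box k w -> A (negw w) = Copp (A w).
Hypothesis B_even : forall w, in_box k w -> B (negw w) = B w.
Hypothesis C_odd : forall w, in_box k w -> Cc (negw w) = Copp (Cc w).

Lemma regular_perturb_pow n e : regular k (fun w => Cpow (perturb (A w) (B w) (Cc w) e) n).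
Proof. apply regular_pow, regular_perturb; auto. Qed.

Lemma regular_bound3 : exists M, 0 <= M /\ forall w, in_box k w ->
  Cmod (A w) <= M /\ Cmod (B w) <= M /\ Cmod (Cc w) <= M.
Proof.
  destruct (regular_bound k A regA) as [M1 [H1 HM1]].
  destruct (regular_bound k B regB) as [M2 [H2 HM2]].
  destruct (regular_bound k Cc regC) as [M3 [H3 HM3]].
  exists (M1 + M2 + M3). split; [lra|]. intros w Hw.
  specialize (HM1 w Hw); specialize (HM2 w Hw); specialize (HM3 w Hw). lra.
Qed.

(* The reflection w |-> -w preserves the uniform law. *)
Lemma pert_moment_reflect n e :
  pert_moment k A B Cc n e = iterE k (fun w => Cpow (Copp (perturb (A w) (B w) (Cc w) (- e))) n).
Proof.
  unfold pert_moment.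
  rewrite <- (iterE_flip_signs k (fun _ => -1) _ ltac:(auto)
               (regular_iter_integrable _ _ (regular_perturb_pow n e))).
  apply iterE_ext. intros w Hw. fold (negw w).
  rewrite A_odd, B_even, C_odd by auto. unfold perturb. f_equal. rewrite RtoC_opp. ring.
Qed.

Lemma pert_moment_odd n e : Nat.Odd n ->
  pert_moment k A B Cc n e = Copp (pert_moment k A B Cc n (- e)).
Proof.
  intros Hn. rewrite pert_moment_reflect.
  rewrite (iterE_ext k _ (fun w => Cmult (RtoC (-1)) (Cpow (perturb (A w) (B w) (Cc w) (- e)) n))).
  - rewrite iterE_scal, RtoC_m1 by apply regular_perturb_pow. unfold pert_moment. ring.
  - intros w Hw. rewrite Cpow_opp_odd, RtoC_m1 by auto. ring.
Qed.

Lemma pert_moment_even n e : Nat.Even n ->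
  pert_moment k A B Cc n e = pert_moment k A B Cc n (- e).
Proof.
  intros Hn. rewrite pert_moment_reflect. apply iterE_ext.
  intros w Hw. apply Cpow_opp_even; auto.
Qed.

Lemma pert_moment_odd_asymptotic n : Nat.Odd n -> exists K, 0 <= K /\ forall e, Rabs e <= 1 ->
  Cmod (Cminus (pert_moment k A B Cc n e) (Cmult (Cmult (RtoC e) (RtoC (INR n)))
      (iterE k (fun w => Cmult (Cpow (A w) (n - 1)) (B w))))) <= K * Rabs e ^ 3.
Proof.
  intros Hn. destruct regular_bound3 as [M [HM HABC]].
  destruct (perturb_pow_odd_part n M HM) as [K [HK Hodd]].
  exists (K / 2). split; [lra|]. intros e He.
  set (c := Cmult (Cmult (RtoC 2) (RtoC e)) (RtoC (INR n))).
  assert (regAB : regular k (fun w => Cmult (Cpow (A w) (n - 1)) (B w)))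
    by (apply regular_mult, regB; apply regular_pow, regA).
  set (F := fun w => Cminus (Cminus (Cpow (perturb (A w) (B w) (Cc w) e) n)
                                    (Cpow (perturb (A w) (B w) (Cc w) (- e)) n))
                            (Cmult c (Cmult (Cpow (A w) (n - 1)) (B w)))).
  assert (EF : iterE k F = Cmult (RtoC 2) (Cminus (pert_moment k A B Cc n e)
      (Cmult (Cmult (RtoC e) (RtoC (INR n))) (iterE k (fun w => Cmult (Cpow (A w) (n - 1)) (B w)))))).
  { unfold F. rewrite !iterE_minus, iterE_scal by
      (try apply regular_minus; try apply regular_scal; auto using regular_perturb_pow).
    fold (pert_moment k A B Cc n e) (pert_moment k A B Cc n (- e)).
    rewrite (pert_moment_odd n e Hn). unfold c. ring. }
  assert (BF : Cmod (iterE k F) <= K * Rabs e ^ 3).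
  { apply iterE_norm_le.
    - apply regular_minus; [apply regular_minus|apply regular_scal]; auto using regular_perturb_pow.
    - intros w Hw. destruct (HABC w Hw) as [Ha [Hb Hc]]. unfold F, c.
      replace (Cmult (Cmult (Cmult (RtoC 2) (RtoC e)) (RtoC (INR n))) (Cmult (Cpow (A w) (n - 1)) (B w)))
        with (Cmult (Cmult (Cmult (Cmult (RtoC 2) (RtoC e)) (RtoC (INR n))) (Cpow (A w) (n - 1))) (B w))
        by ring.
      apply Hodd; auto. }
  rewrite EF, Cmod_mult, Cmod_R, Rabs_right in BF by lra.
  lra.
Qed.

Lemma pert_moment_even_asymptotic n : Nat.Even n -> exists K, 0 <= K /\ forall e, Rabs e <= 1 ->
  Cmod (Cminus (pert_moment k A B Cc n e) (iterE k (fun w => Cpow (A w) n))) <= K * Rabs e ^ 2.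
Proof.
  intros Hn. destruct regular_bound3 as [M [HM HABC]].
  destruct (perturb_pow_even_part n M HM) as [K [HK Heven]].
  exists (K / 2). split; [lra|]. intros e He.
  assert (regAn : regular k (fun w => Cpow (A w) n)) by (apply regular_pow, regA).
  set (F := fun w => Cminus (Cplus (Cpow (perturb (A w) (B w) (Cc w) e) n)
                                   (Cpow (perturb (A w) (B w) (Cc w) (- e)) n))
                            (Cmult (RtoC 2) (Cpow (A w) n))).
  assert (EF : iterE k F =
    Cmult (RtoC 2) (Cminus (pert_moment k A B Cc n e) (iterE k (fun w => Cpow (A w) n)))).
  { unfold F. rewrite iterE_minus, iterE_plus, iterE_scal by
      (try apply regular_plus; try apply regular_scal; auto using regular_perturb_pow).
    fold (pert_moment k A B Cc n e) (pert_moment k A B Cc n (- e)).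
    rewrite <- (pert_moment_even n e Hn). ring. }
  assert (BF : Cmod (iterE k F) <= K * Rabs e ^ 2).
  { apply iterE_norm_le.
    - apply regular_minus; [apply regular_plus|apply regular_scal]; auto using regular_perturb_pow.
    - intros w Hw. destruct (HABC w Hw) as [Ha [Hb Hc]]. apply Heven; auto. }
  rewrite EF, Cmod_mult, Cmod_R, Rabs_right in BF by lra.
  lra.
Qed.

End Symmetric_perturbation.

Lemma Mcentral_1_eq0 m f : iter_integrable m f -> Mcentral m 1 f = RtoC 0.
Proof.
  intros Hf. unfold Mcentral, Expect.
  rewrite (iterE_ext m _ (fun w => Cminus (f w) (iterE m f))) by (intros; simpl; ring).
  rewrite (proj2 (iterE_minus_integrable m f _ Hf (regular_iter_integrable _ _ (regular_const _ _)))).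
  rewrite iterE_const. ring.
Qed.

Lemma iterE_pow_close_to_pert_moment k n p A B Cc V (e Ky M : R) :
  regular k A -> regular k B -> regular k Cc -> regular k V ->
  0 < e <= 1 -> 0 <= Ky -> 0 <= M ->
  (forall w, in_box k w -> Cmod (A w) <= M /\ Cmod (B w) <= M /\ Cmod (Cc w) <= M) ->
  (forall w, in_box k w ->
     Cmod (Cminus (V w) (Cmult (RtoC e) (perturb (A w) (B w) (Cc w) e))) <= Ky * e ^ (p + 1)) ->
  Cmod (Cminus (iterE k (fun w => Cpow (V w) n)) (Cmult (RtoC (e ^ n)) (pert_moment k A B Cc n e)))
    <= INR n * (3 * M + Ky) ^ (n - 1) * Ky * e ^ (n + p).
Proof.
  intros regA regB regC regV He HKy HM HABC HV.
  assert (regX : regular k (fun w => Cmult (RtoC e) (perturb (A w) (B w) (Cc w) e)))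
    by (apply regular_scal, regular_perturb; auto).
  unfold pert_moment. rewrite <- iterE_scal by (apply regular_pow, regular_perturb; auto).
  rewrite (iterE_ext k (fun w => Cmult (RtoC (e ^ n)) _)
             (fun w => Cpow (Cmult (RtoC e) (perturb (A w) (B w) (Cc w) e)) n))
    by (intros; rewrite Cpow_mult_l, RtoC_pow; auto).
  rewrite <- iterE_minus by (apply regular_pow; auto).
  apply iterE_norm_le; [apply regular_minus; apply regular_pow; auto|].
  intros w Hw. destruct (HABC w Hw) as [Ha [Hb Hc]].
  assert (He1 : Rabs e <= 1) by (rewrite Rabs_right; lra).
  assert (Hpow : e ^ (p + 1) <= e) by (rewrite <- (pow_1 e) at 2; apply pow_le_pow_small; lra || lia).
  eapply Rle_trans.
  - apply (Cpow_sub_le_of_close n _ _ e (3 * M) Ky (Ky * e ^ (p + 1))); [lra| | |apply HV; auto].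
    + rewrite Cmod_mult, Cmod_R, Rabs_right by lra.
      apply Rmult_le_compat_l; [lra|apply perturb_norm_le; auto].
    + eapply Rle_trans; [apply HV; auto|]. rewrite (Rmult_comm e). apply Rmult_le_compat_l; auto.
  - destruct n as [|n]; [simpl; lra|].
    replace (S n - 1)%nat with n by lia. replace (S n + p)%nat with (n + (p + 1))%nat by lia.
    rewrite Rpow_mult_distr, (pow_add e n). apply Req_le. ring.
Qed.

Definition shape_term m (D : list nat -> C) q (w : nat -> R) :=
  msum q m (fun l => Cmult (RtoC (omprod w l)) (D l)).

Lemma regular_shape_term m D q : regular m (shape_term m D q).
Proof.
  apply (regular_msum m m q (fun w l => Cmult (RtoC (omprod w l)) (D l))).
  intros l Hl. apply (regular_mult m (fun w => RtoC (omprod w l)) (fun _ => D l)).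
  - apply regular_omprod; auto.
  - apply regular_const.
Qed.

Lemma omprod_negw w l : omprod (negw w) l = (-1) ^ (length l) * omprod w l.
Proof. induction l as [|i l IH]; simpl; [|rewrite IH; unfold negw]; ring. Qed.

Lemma msum_scal_length m q : forall (g g' : list nat -> C) c,
  (forall l, length l = q -> g' l = Cmult c (g l)) -> msum q m g' = Cmult c (msum q m g).
Proof.
  induction q as [|q IH]; intros g g' c H; simpl.
  - apply H; auto.
  - rewrite <- csum_scal. apply csum_ext. intros i _. apply IH. intros l Hl. apply H. simpl; auto.
Qed.

Lemma shape_term_negw m D q w :
  shape_term m D q (negw w) = Cmult (RtoC ((-1) ^ q)) (shape_term m D q w).
Proof.
  apply msum_scal_length. intros l Hl. rewrite omprod_negw, Hl, RtoC_mult. ring.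
Qed.

Lemma shape_term_1 m D w : shape_term m D 1 w = csum m (fun i => Cmult (RtoC (w i)) (D (i :: nil))).
Proof. apply csum_ext. intros i _. simpl. rewrite Rmult_1_r. auto. Qed.

Lemma shape_term_2 m D w : shape_term m D 2 w =
  csum m (fun i => csum m (fun j => Cmult (RtoC (w i * w j)) (D (i :: j :: nil)))).
Proof. apply csum_ext. intros i _. apply csum_ext. intros j _. simpl. rewrite Rmult_1_r. auto. Qed.

Lemma shape_term_1_odd m D w : shape_term m D 1 (negw w) = Copp (shape_term m D 1 w).
Proof. rewrite shape_term_negw, pow_1, RtoC_m1. ring. Qed.

Lemma iterE_shape_term_1 m D : iterE m (shape_term m D 1) = RtoC 0.
Proof.
  apply (iterE_odd_eq0 m (fun _ => -1)); auto using regular_shape_term.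
  intros w _. apply shape_term_1_odd.
Qed.

Lemma iterE_shape_term_1_sq m D : iterE m (fun w => Cpow (shape_term m D 1 w) 2) =
  Cmult (RtoC (/3)) (csum m (fun i => Cpow (D (i :: nil)) 2)).
Proof.
  rewrite (iterE_ext m _ (fun w => csum m (fun i => csum m (fun j =>
             Cmult (RtoC (w i * w j)) (Cmult (D (i :: nil)) (D (j :: nil))))))).
  - rewrite iterE_quadratic_form. f_equal. apply csum_ext. intros i _. simpl. ring.
  - intros w _. rewrite shape_term_1. simpl. rewrite Cmult_1_r, csum_mult.
    apply csum_ext. intros i _. apply csum_ext. intros j _. rewrite RtoC_mult. ring.
Qed.

Definition quad_term m D w := Cmult (RtoC (/2)) (shape_term m D 2 w).

Definition cubic_term m D w := Cmult (RtoC (/6)) (shape_term m D 3 w).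

Lemma regular_quad_term m D : regular m (quad_term m D).
Proof. apply regular_scal, regular_shape_term. Qed.

Lemma regular_cubic_term m D : regular m (cubic_term m D).
Proof. apply regular_scal, regular_shape_term. Qed.

Lemma quad_term_even m D w : quad_term m D (negw w) = quad_term m D w.
Proof. unfold quad_term. rewrite shape_term_negw. replace ((-1) ^ 2) with 1 by ring. ring. Qed.

Lemma cubic_term_odd m D w : cubic_term m D (negw w) = Copp (cubic_term m D w).
Proof.
  unfold cubic_term. rewrite shape_term_negw. replace ((-1) ^ 3) with (-1) by ring.
  rewrite RtoC_m1. ring.
Qed.

Lemma iterE_quad_term m D :
  iterE m (quad_term m D) = Cmult (RtoC (/ INR (fact 3))) (csum m (fun i => D (i :: i :: nil))).
Proof.
  unfold quad_term. rewrite iterE_scal by apply regular_shape_term.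
  rewrite (iterE_ext m _ _ (fun w _ => shape_term_2 m D w)), iterE_quadratic_form.
  rewrite Cmult_assoc, <- RtoC_mult. simpl. f_equal. f_equal. field.
Qed.

Definition centred_quad m D w := Cminus (quad_term m D w) (iterE m (quad_term m D)).

Lemma regular_centred_quad m D : regular m (centred_quad m D).
Proof. apply regular_minus; [apply regular_quad_term|apply regular_const]. Qed.

Lemma centred_quad_even m D w : centred_quad m D (negw w) = centred_quad m D w.
Proof. unfold centred_quad. rewrite quad_term_even. reflexivity. Qed.

Lemma centred_quad_eq m D w : centred_quad m D w =
  Cminus (Cmult (RtoC (/ INR (fact 2)))
            (csum m (fun i => csum m (fun j => Cmult (RtoC (w i * w j)) (D (i :: j :: nil))))))
         (Cmult (RtoC (/ INR (fact 3))) (csum m (fun i => D (i :: i :: nil)))).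
Proof.
  unfold centred_quad. rewrite iterE_quad_term. unfold quad_term. rewrite shape_term_2.
  replace (INR (fact 2)) with 2 by (simpl; ring). reflexivity.
Qed.

Lemma taylor_terms_S N m D eps w : taylor_terms (S N) m D eps w =
  Cplus (taylor_terms N m D eps w)
        (Cmult (RtoC (eps ^ S N / INR (fact (S N)))) (shape_term m D (S N) w)).
Proof. reflexivity. Qed.

Lemma taylor_terms_2 m D eps w : taylor_terms 2 m D eps w =
  Cmult (RtoC eps) (perturb (shape_term m D 1 w) (quad_term m D w) (RtoC 0) eps).
Proof.
  rewrite !taylor_terms_S. change (taylor_terms 0 m D eps w) with (RtoC 0).
  replace (eps ^ 1 / INR (fact 1)) with eps by (simpl; field).
  replace (eps ^ 2 / INR (fact 2)) with (eps * eps * / 2) by (simpl; field).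
  unfold perturb, quad_term. rewrite !RtoC_mult. ring.
Qed.

Lemma taylor_terms_3 m D eps w : taylor_terms 3 m D eps w =
  Cmult (RtoC eps) (perturb (shape_term m D 1 w) (quad_term m D w) (cubic_term m D w) eps).
Proof.
  rewrite !taylor_terms_S. change (taylor_terms 0 m D eps w) with (RtoC 0).
  replace (eps ^ 1 / INR (fact 1)) with eps by (simpl; field).
  replace (eps ^ 2 / INR (fact 2)) with (eps * eps * / 2) by (simpl; field).
  replace (eps ^ 3 / INR (fact 3)) with (eps * eps * eps * / 6) by (simpl; field).
  unfold perturb, quad_term, cubic_term. rewrite !RtoC_mult. ring.
Qed.

Lemma regular_taylor_terms m D N eps : regular m (fun w => taylor_terms N m D eps w).
Proof.
  induction N as [|N IH]; [apply (regular_const m (RtoC 0))|].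
  apply (regular_ext m (fun w => Cplus (taylor_terms N m D eps w)
           (Cmult (RtoC (eps ^ S N / INR (fact (S N)))) (shape_term m D (S N) w)))).
  - intros; symmetry; apply taylor_terms_S.
  - apply regular_plus, regular_scal, regular_shape_term; auto.
Qed.

Lemma taylor_coef_le eps q p : 0 < eps <= 1 -> (p < q)%nat ->
  Rabs (eps ^ q / INR (fact q)) <= eps ^ (p + 1).
Proof.
  intros He Hq.
  assert (Hf : 1 <= INR (fact q)) by (apply (le_INR 1); pose proof (lt_O_fact q); lia).
  assert (0 <= eps ^ q) by (apply pow_le; lra).
  rewrite Rabs_right by (apply Rle_ge, Rdiv_le_0_compat; lra).
  apply Rle_trans with (eps ^ q); [|apply pow_le_pow_small; lra || lia].
  unfold Rdiv. rewrite <- (Rmult_1_r (eps ^ q)) at 2.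
  apply Rmult_le_compat_l; auto. rewrite <- Rinv_1. apply Rinv_le_contravar; lra.
Qed.

Lemma taylor_terms_tail m D p N : (p <= N)%nat -> exists K, 0 <= K /\
  forall eps w, 0 < eps <= 1 -> in_box m w ->
  Cmod (Cminus (taylor_terms N m D eps w) (taylor_terms p m D eps w)) <= K * eps ^ (p + 1).
Proof.
  intros HpN. induction HpN as [|N HpN IHN].
  - exists 0. split; [lra|]. intros. unfold Cminus. rewrite Cplus_opp_r, Cmod_0. lra.
  - destruct IHN as [K [HK IH]].
    destruct (regular_bound m _ (regular_shape_term m D (S N))) as [MT [HMT HT]].
    exists (K + MT). split; [lra|]. intros eps w He Hw.
    rewrite taylor_terms_S.
    replace (Cminus (Cplus _ _) _) with
      (Cplus (Cminus (taylor_terms N m D eps w) (taylor_terms p m D eps w))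
        (Cmult (RtoC (eps ^ S N / INR (fact (S N)))) (shape_term m D (S N) w))) by ring.
    eapply Rle_trans.
    { apply Cmod_plus_le; [apply IH; auto|apply Cmod_mult_le; [rewrite Cmod_R|apply HT; auto]].
      apply (taylor_coef_le eps (S N) p); [auto|lia]. }
    assert (0 <= eps ^ (p + 1)) by (apply pow_le; lra).
    apply Req_le. ring.
Qed.

Lemma iterE_perturb k A B Cc e : regular k A -> regular k B -> regular k Cc ->
  iterE k (fun w => perturb (A w) (B w) (Cc w) e) = perturb (iterE k A) (iterE k B) (iterE k Cc) e.
Proof.
  intros regA regB regC. unfold perturb.
  rewrite (iterE_plus k (fun w => Cplus (A w) (Cmult (RtoC e) (B w)))), iterE_plus, !iterE_scal;
    auto using regular_plus, regular_scal.
Qed.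

Lemma bigO_eps_ext f g g' k : (forall e, g e = g' e) -> bigO_eps f g k -> bigO_eps f g' k.
Proof.
  intros H [K [e0 [He0 HB]]]. exists K, e0. split; auto. intros eps He. rewrite <- H. auto.
Qed.

Section Perturbed_field.

Variables m N : nat.
Variable U : R -> (nat -> R) -> C.
Variable u0 : C.
Variable D : list nat -> C.
Variables Kt et ec : R.
Hypothesis Het : 0 < et.
Hypothesis Hec : 0 < ec.
Hypothesis Htaylor : forall eps w, 0 < eps < et -> in_box m w ->
  Cmod (Cminus (U eps w) (Cplus u0 (taylor_terms N m D eps w))) <= Kt * eps ^ (S N).
Hypothesis Hcont : forall eps, 0 < eps < ec -> cont_on_box m (U eps).

Let e1 := Rmin 1 (Rmin et ec).

Lemma e1_pos : 0 < e1.
Proof. apply Rmin_pos; [lra|apply Rmin_pos; auto]. Qed.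

Lemma small_eps eps : 0 < eps < e1 -> 0 < eps <= 1 /\ eps < et /\ eps < ec.
Proof.
  unfold e1. intros He. pose proof (Rmin_l 1 (Rmin et ec)). pose proof (Rmin_r 1 (Rmin et ec)).
  pose proof (Rmin_l et ec). pose proof (Rmin_r et ec). lra.
Qed.

Lemma taylor_remainder p : (p <= N)%nat -> exists KR, 0 <= KR /\
  forall eps w, 0 < eps < e1 -> in_box m w ->
    Cmod (Cminus (U eps w) (Cplus u0 (taylor_terms p m D eps w))) <= KR * eps ^ (p + 1).
Proof.
  intros HpN. destruct (taylor_terms_tail m D p N HpN) as [K [HK Htail]].
  exists (Rabs Kt + K). split; [pose proof (Rabs_pos Kt); lra|].
  intros eps w He Hw. destruct (small_eps eps He) as [He1 [Het' _]].
  replace (Cminus (U eps w) (Cplus u0 (taylor_terms p m D eps w))) with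
    (Cplus (Cminus (U eps w) (Cplus u0 (taylor_terms N m D eps w)))
           (Cminus (taylor_terms N m D eps w) (taylor_terms p m D eps w))) by ring.
  eapply Rle_trans; [apply Cmod_plus_le; [apply Htaylor|apply Htail]; auto; lra|].
  assert (eps ^ S N <= eps ^ (p + 1)) by (apply pow_le_pow_small; lra || lia).
  assert (0 <= eps ^ S N) by (apply pow_le; lra).
  assert (Kt * eps ^ S N <= Rabs Kt * eps ^ (p + 1)).
  { apply Rle_trans with (Rabs Kt * eps ^ S N).
    - apply Rmult_le_compat_r; auto. apply Rle_abs.
    - apply Rmult_le_compat_l; auto. apply Rabs_pos. }
  lra.
Qed.

Lemma regular_field eps : 0 < eps < e1 -> regular m (U eps).
Proof.
  intros He. destruct (small_eps eps He) as [_ [_ Hec']].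
  split; [apply cont_on_box_unif_cont, Hcont; lra|].
  destruct (taylor_remainder 0 ltac:(lia)) as [KR [HKR HR]].
  exists (Cmod u0 + KR * eps ^ 1). intros w Hw.
  replace (U eps w) with (Cplus u0 (Cminus (U eps w) (Cplus u0 (taylor_terms 0 m D eps w))))
    by (simpl; ring).
  apply Cmod_plus_le; [lra|apply HR; auto].
Qed.

Section Centred_expansion.

Variable p : nat.
Variable Cc : (nat -> R) -> C.
Hypothesis HpN : (p <= N)%nat.
Hypothesis regC : regular m Cc.
Hypothesis C_odd : forall w, in_box m w -> Cc (negw w) = Copp (Cc w).
Hypothesis Htaylor_p : forall eps w, taylor_terms p m D eps w =
  Cmult (RtoC eps) (perturb (shape_term m D 1 w) (quad_term m D w) (Cc w) eps).

(* The Taylor polynomial has mean u0 + eps^2 E[quad_term] because the linear term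
   and [Cc] are odd in w. *)
Lemma centred_field_expansion : exists Ky, 0 <= Ky /\ forall eps, 0 < eps < e1 ->
  forall w, in_box m w ->
    Cmod (Cminus (Cminus (U eps w) (iterE m (U eps)))
       (Cmult (RtoC eps) (perturb (shape_term m D 1 w) (centred_quad m D w) (Cc w) eps)))
      <= Ky * eps ^ (p + 1).
Proof.
  destruct (taylor_remainder p HpN) as [KR [HKR HR]].
  exists (2 * KR). split; [lra|]. intros eps He w Hw.
  set (Rf := fun w => Cminus (U eps w) (Cplus u0 (taylor_terms p m D eps w))).
  assert (regR : regular m Rf).
  { apply regular_minus; [apply regular_field; auto|].
    apply (regular_plus m (fun _ => u0)); [apply regular_const|apply regular_taylor_terms]. }
  assert (EU : iterE m (U eps) =
    Cplus (Cplus u0 (Cmult (RtoC (eps * eps)) (iterE m (quad_term m D)))) (iterE m Rf)).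
  { rewrite (iterE_ext m (U eps) (fun w => Cplus (Cplus u0 (Cmult (RtoC eps)
        (perturb (shape_term m D 1 w) (quad_term m D w) (Cc w) eps))) (Rf w)))
      by (intros; unfold Rf; rewrite Htaylor_p; ring).
    rewrite iterE_plus, (iterE_plus m (fun _ => u0)), iterE_const, iterE_scal, iterE_perturb,
      iterE_shape_term_1, (iterE_odd_eq0 m (fun _ => -1) Cc);
      auto using regular_shape_term, regular_quad_term, regular_const, regular_scal,
        regular_perturb, regular_plus.
    unfold perturb. rewrite RtoC_mult. ring. }
  replace (Cminus (Cminus (U eps w) (iterE m (U eps))) _) with (Cminus (Rf w) (iterE m Rf))
    by (rewrite EU; unfold Rf, centred_quad, perturb; rewrite Htaylor_p, RtoC_mult; unfold perturb; ring).
  assert (Cmod (iterE m Rf) <= KR * eps ^ (p + 1)) by (apply iterE_norm_le; auto; intros; apply HR; auto).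
  assert (Cmod (Rf w) <= KR * eps ^ (p + 1)) by (apply HR; auto).
  unfold Cminus. eapply Rle_trans; [apply Cmod_triangle|]. rewrite Cmod_opp. lra.
Qed.

Lemma central_moment_asymptotic n (target : R -> C) Kg : 0 <= Kg ->
  (forall e, 0 < e <= 1 ->
     Cmod (Cminus (pert_moment m (shape_term m D 1) (centred_quad m D) Cc n e) (target e))
       <= Kg * e ^ p) ->
  bigO_eps (fun eps => Mcentral m n (U eps)) (fun eps => Cmult (RtoC (eps ^ n)) (target eps)) (n + p).
Proof.
  intros HKg Htarget.
  destruct centred_field_expansion as [Ky [HKy Hexp]].
  destruct (regular_bound3 m (shape_term m D 1) (centred_quad m D) Cc) as [M [HM HABC]];
    auto using regular_shape_term, regular_centred_quad.
  exists (INR n * (3 * M + Ky) ^ (n - 1) * Ky + Kg), e1. split; [apply e1_pos|].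
  intros eps He. destruct (small_eps eps He) as [He1 _].
  assert (Hclose := iterE_pow_close_to_pert_moment m n p (shape_term m D 1) (centred_quad m D) Cc
    (fun w => Cminus (U eps w) (iterE m (U eps))) eps Ky M).
  unfold Mcentral, Expect.
  set (G := pert_moment m (shape_term m D 1) (centred_quad m D) Cc n eps) in *.
  replace (Cminus _ (Cmult (RtoC (eps ^ n)) (target eps))) with
    (Cplus (Cminus (iterE m (fun w => Cpow (Cminus (U eps w) (iterE m (U eps))) n))
                   (Cmult (RtoC (eps ^ n)) G))
           (Cmult (RtoC (eps ^ n)) (Cminus G (target eps)))) by ring.
  eapply Rle_trans.
  { apply Cmod_plus_le; [apply Hclose|apply Cmod_mult_le; [apply Req_le, Cmod_R|apply Htarget]];
      auto using regular_shape_term, regular_centred_quad, regular_minus, regular_const, regular_field. }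
  rewrite Rabs_right by (apply Rle_ge, pow_le; lra).
  rewrite (pow_add eps n p). apply Req_le. ring.
Qed.

End Centred_expansion.

Lemma central_moment_even n : (2 <= N)%nat -> Nat.Even n ->
  bigO_eps (fun eps => Mcentral m n (U eps))
    (fun eps => Cmult (RtoC (eps ^ n)) (iterE m (fun w => Cpow (shape_term m D 1 w) n))) (n + 2).
Proof.
  intros HN Hn.
  destruct (pert_moment_even_asymptotic m (shape_term m D 1) (centred_quad m D) (fun _ => RtoC 0)
    (regular_shape_term m D 1) (regular_centred_quad m D) (regular_const m (RtoC 0))
    (fun w _ => shape_term_1_odd m D w) (fun w _ => centred_quad_even m D w)
    (fun _ _ => eq_sym Copp_0) n Hn) as [Kg [HKg HG]].
  apply (central_moment_asymptotic 2 (fun _ => RtoC 0) HN (regular_const m (RtoC 0))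
    (fun _ _ => eq_sym Copp_0) (taylor_terms_2 m D) n _ Kg HKg).
  intros e He. specialize (HG e). rewrite Rabs_right in HG by lra. apply HG; lra.
Qed.

Lemma central_moment_odd n : (3 <= N)%nat -> Nat.Odd n ->
  bigO_eps (fun eps => Mcentral m n (U eps))
    (fun eps => Cmult (RtoC (eps ^ n)) (Cmult (Cmult (RtoC eps) (RtoC (INR n)))
       (iterE m (fun w => Cmult (Cpow (shape_term m D 1 w) (n - 1)) (centred_quad m D w)))))
    (n + 3).
Proof.
  intros HN Hn.
  destruct (pert_moment_odd_asymptotic m (shape_term m D 1) (centred_quad m D) (cubic_term m D)
    (regular_shape_term m D 1) (regular_centred_quad m D) (regular_cubic_term m D)
    (fun w _ => shape_term_1_odd m D w) (fun w _ => centred_quad_even m D w)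
    (fun w _ => cubic_term_odd m D w) n Hn) as [Kg [HKg HG]].
  apply (central_moment_asymptotic 3 (cubic_term m D) HN (regular_cubic_term m D)
    (fun w _ => cubic_term_odd m D w) (taylor_terms_3 m D) n _ Kg HKg).
  intros e He. specialize (HG e). rewrite Rabs_right in HG by lra. apply HG; lra.
Qed.

End Perturbed_field.

Lemma binomial_n_1 n : (0 < n)%nat -> Binomial.C n 1 = INR n.
Proof.
  intros Hn. destruct n as [|k]; [lia|]. unfold Binomial.C.
  replace (S k - 1)%nat with k by lia.
  rewrite fact_simpl, mult_INR. simpl (INR (fact 1)). field. apply INR_fact_neq_0.
Qed.

Theorem theorem4p2 (m N : nat) (U : R -> (nat -> R) -> C) (u0 : C)
  (D : list nat -> C)
  (* multivariate shape Taylor expansion of order N, uniform in w *)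
  (Htaylor : exists K e0, 0 < e0 /\
     forall eps w, 0 < eps < e0 -> in_box m w ->
       Cmod (Cminus (U eps w) (Cplus u0 (taylor_terms N m D eps w)))
         <= K * eps ^ (S N))
  (* regularity: for small eps, w |-> U eps w is continuous on [-1,1]^m *)
  (Hcont : exists e0, 0 < e0 /\
     forall eps, 0 < eps < e0 ->
     forall w, in_box m w -> forall r, 0 < r -> exists d, 0 < d /\
       forall w', in_box m w' -> (forall i, (i < m)%nat -> Rabs (w' i - w i) < d) ->
         Cmod (Cminus (U eps w') (U eps w)) < r) :
  (* (i) *)
  (exists e0, 0 < e0 /\ forall eps, 0 < eps < e0 ->
      Mcentral m 1 (U eps) = RtoC 0) /\
  (* (ii) *)
  ((2 <= N)%nat ->
     bigO_eps (fun eps => Mcentral m 2 (U eps))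
       (fun eps => Cmult (RtoC (eps ^ 2 / 3))
          (csum m (fun i => Cpow (D (i :: nil)) 2))) 4) /\
  (* (iii) *)
  ((2 <= N)%nat -> forall n : nat, (0 < n)%nat -> Nat.Even n ->
     bigO_eps (fun eps => Mcentral m n (U eps))
       (fun eps => Cmult (RtoC (eps ^ n))
          (Expect m (fun w =>
             Cpow (csum m (fun i => Cmult (RtoC (w i)) (D (i :: nil)))) n)))
       (n + 2)) /\
  (* (iv) *)
  ((3 <= N)%nat -> forall n : nat, Nat.Odd n ->
     bigO_eps (fun eps => Mcentral m n (U eps))
       (fun eps => Cmult (RtoC (eps ^ (n + 1) * Binomial.C n 1))
          (Expect m (fun w =>
             Cmult
               (Cpow (csum m (fun i => Cmult (RtoC (w i)) (D (i :: nil)))) (n - 1))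
               (Cminus
                  (Cmult (RtoC (/ INR (fact 2)))
                     (csum m (fun i => csum m (fun j =>
                        Cmult (RtoC (w i * w j)) (D (i :: j :: nil))))))
                  (Cmult (RtoC (/ INR (fact 3)))
                     (csum m (fun i => D (i :: i :: nil))))))))
       (n + 3)).
Proof.
  destruct Htaylor as [Kt [et [Het Ht]]], Hcont as [ec [Hec Hc]].
  pose proof (central_moment_even m N U u0 D Kt et ec Het Hec Ht Hc) as Heven.
  pose proof (central_moment_odd m N U u0 D Kt et ec Het Hec Ht Hc) as Hodd.
  split; [|split; [|split]].
  - exists ec. split; auto. intros eps He.
    apply Mcentral_1_eq0, unif_cont_iter_integrable, cont_on_box_unif_cont. exact (Hc eps He).
  - intros HN. eapply bigO_eps_ext; [|apply (Heven 2%nat HN); exists 1%nat; reflexivity].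
    intros eps. rewrite iterE_shape_term_1_sq, Cmult_assoc, <- RtoC_mult. reflexivity.
  - intros HN n _ Hn. eapply bigO_eps_ext; [|apply (Heven n HN Hn)].
    intros eps. unfold Expect. f_equal. apply iterE_ext. intros w _. rewrite shape_term_1. reflexivity.
  - intros HN n Hn. eapply bigO_eps_ext; [|apply (Hodd n HN Hn)].
    intros eps. unfold Expect.
    rewrite binomial_n_1 by (destruct Hn; lia).
    rewrite (iterE_ext m _ _ (fun w _ => f_equal2 Cmult
      (f_equal (fun z => Cpow z (n - 1)) (shape_term_1 m D w)) (centred_quad_eq m D w))).
    rewrite pow_add, !RtoC_mult, pow_1. ring.
Qed.
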